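(* For all integers $t\ge0$, \[|\kappa_2(t+1)-\kappa_2(t)|\le2,\quad |\kappa_3(t+1)-\kappa_3(t)|\le6,\quad |\kappa_4(t+1)-\kappa_4(t)|\le28,\quad |\kappa_5(t+1)-\kappa_5(t)|\le240.\]
   Context: $s(n)$ is the number of $1$s in the binary expansion of $n\ge0$. For integers $j$ and $t\ge0$, $\delta(j,t)=\lim_{N\to\infty}\frac1N|\{0\le n<N: s(n+t)-s(n)=j\}|$, a probability distribution on $\mathbb Z$. $\kappa_j(t)$ denotes the $j$-th cumulant of this distribution, i.e. the real numbers with $\log\sum_{k\in\mathbb Z}\delta(k,t)e^{2\pi i k\vartheta}=\sum_{j\ge0}\frac{\kappa_j(t)}{j!}(2\pi i\vartheta)^j$ for $\vartheta$ near $0$. *)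

From Stdlib Require Import Reals ZArith.
From Coquelicot Require Import Coquelicot.
Open Scope R_scope.

Fixpoint pos_ones (p : positive) : nat :=
  match p with
  | xH => 1%nat
  | xO q => pos_ones q
  | xI q => S (pos_ones q)
  end.

Definition s (n : nat) : nat :=
  match N.of_nat n with
  | N0 => 0%nat
  | Npos p => pos_ones p
  end.

Fixpoint cnt (j : Z) (t : nat) (N : nat) : nat :=
  match N with
  | O => O
  | S M => (cnt j t M +
            (if Z.eqb (Z.of_nat (s (M + t)) - Z.of_nat (s M))%Z j then 1 else 0))%nat
  end.

Definition delta (j : Z) (t : nat) : R :=
  real (Lim_seq (fun N => INR (cnt j t N) / INR N)).

Definition cexp (z : C) : C :=
  (exp (fst z) * cos (snd z), exp (fst z) * sin (snd z)).

Definition sumZ (f : Z -> R) : R :=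
  Series (fun k => f (Z.of_nat k)) + Series (fun k => f (- Z.of_nat (S k))%Z).

Definition charf (t : nat) (theta : R) : C :=
  (sumZ (fun k => delta k t * cos (2 * PI * IZR k * theta)),
   sumZ (fun k => delta k t * sin (2 * PI * IZR k * theta))).

(* kappa is the cumulant sequence of delta(.,t):
   log charf t theta = sum_{j>=0} kappa_j / j! (2 pi i theta)^j  for theta near 0.
   (Stated by exponentiating: the series converges to L(theta) and exp L(theta)
    = charf t theta.) *)
Definition is_cumulants (t : nat) (kappa : nat -> R) : Prop :=
  exists r : R, 0 < r /\
    forall theta : R, Rabs theta < r ->
      exists L : C,
        is_series (K := C_AbsRing) (V := C_NormedModule)
          (fun j => Cmult (RtoC (kappa j / INR (fact j)))
                          (pow_n (K := C_Ring) ((0%R, (2 * PI * theta)%R) : C) j)) L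
        /\ cexp L = charf t theta.

From Stdlib Require Import Reals ZArith NArith Lia Lra.
From Coquelicot Require Import Coquelicot.
Open Scope R_scope.

(* Since s(2n) = s(n) and s(2n+1) = s(n) + 1, the frequencies satisfy
   delta(j,2t) = delta(j,t) and delta(j,2t+1) = (delta(j-1,t) + delta(j+1,t+1))/2,
   so the characteristic functions satisfy phi_2t = phi_t and
   phi_(2t+1)(y) = (e^(iy) phi_t(y) + e^(-iy) phi_(t+1)(y))/2.  Comparing the
   Taylor coefficients of order <= 5 at 0, computed from
   phi_t = exp (sum_j kappa_j(t) (iy)^j / j!), gives kappa1_eq0 = 0,
   kappa_j(2t) = kappa_j(t) and kappa_j(2t+1) - kappa_j(t) = jump_j(D(t)) for
   2 <= j <= 5, where D(t) = kappa(t+1) - kappa(t) and jump is an explicit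
   polynomial map.  Hence D(2t) = jump(D(t)) and D(2t+1) = D(t) - jump(D(t)).
   Both maps send the box [-2,2] x [-6,6] x [-28,28] x [-240,240] into itself,
   and D(0) = (2,-6,26,-150) is in the box, so induction on t concludes. *)

(** * Digit sums and the frequencies [delta] *)

Lemma s_double n : s (2 * n) = s n.
Proof. unfold s. rewrite Nat2N.inj_mul. now destruct (N.of_nat n). Qed.

Lemma s_double_add1 n : s (2 * n + 1) = S (s n).
Proof.
  unfold s. rewrite Nat2N.inj_add, Nat2N.inj_mul. now destruct (N.of_nat n).
Qed.

Lemma s_succ_le n : (s (S n) <= S (s n))%nat.
Proof.
  induction n as [n IH] using (well_founded_induction lt_wf).
  destruct (Nat.Even_or_Odd n) as [[m ->]|[m ->]].
  - replace (S (2 * m)) with (2 * m + 1)%nat by lia.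
    rewrite s_double_add1, s_double. lia.
  - replace (S (2 * m + 1)) with (2 * S m)%nat by lia.
    rewrite s_double, s_double_add1. specialize (IH m ltac:(lia)). lia.
Qed.

Lemma cnt_le j t N : (cnt j t N <= N)%nat.
Proof. induction N as [|N IH]; simpl; [lia|]. destruct (Z.eqb _ _); lia. Qed.

Lemma cnt_double j t N : cnt j (2 * t) (2 * N) = (2 * cnt j t N)%nat.
Proof.
  induction N as [|N IH]; [reflexivity|].
  replace (2 * S N)%nat with (S (S (2 * N))) by lia. cbn [cnt].
  replace (S (2 * N))%nat with (2 * N + 1)%nat by lia. rewrite IH.
  replace (2 * N + 2 * t)%nat with (2 * (N + t))%nat by lia.
  replace (2 * N + 1 + 2 * t)%nat with (2 * (N + t) + 1)%nat by lia.
  rewrite !s_double, !s_double_add1.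
  replace (Z.of_nat (S (s (N + t))) - Z.of_nat (S (s N)))%Z
    with (Z.of_nat (s (N + t)) - Z.of_nat (s N))%Z by lia.
  destruct (Z.eqb _ _); lia.
Qed.

Lemma cnt_double_add1 j t N :
  cnt j (2 * t + 1) (2 * N) = (cnt (j - 1) t N + cnt (j + 1) (t + 1) N)%nat.
Proof.
  induction N as [|N IH]; [reflexivity|].
  replace (2 * S N)%nat with (S (S (2 * N))) by lia. cbn [cnt].
  replace (S (2 * N))%nat with (2 * N + 1)%nat by lia. rewrite IH.
  replace (2 * N + (2 * t + 1))%nat with (2 * (N + t) + 1)%nat by lia.
  replace (2 * N + 1 + (2 * t + 1))%nat with (2 * (N + (t + 1)))%nat by lia.
  rewrite !s_double, !s_double_add1.
  repeat match goal with |- context [Z.eqb ?a ?b] => destruct (Z.eqb_spec a b) end; lia.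
Qed.

Lemma cnt_0 j N : cnt j 0 N = if Z.eqb 0 j then N else 0%nat.
Proof.
  induction N as [|N IH]; [now destruct (Z.eqb 0 j)|].
  cbn [cnt]. rewrite IH, Nat.add_0_r, Z.sub_diag. destruct (Z.eqb 0 j); lia.
Qed.

Lemma cnt_1_ge2 j N : (2 <= j)%Z -> cnt j 1 N = 0%nat.
Proof.
  intros Hj. induction N as [|N IH]; [reflexivity|]. cbn [cnt].
  rewrite IH, Nat.add_1_r. pose proof (s_succ_le N).
  destruct (Z.eqb_spec (Z.of_nat (s (S N)) - Z.of_nat (s N)) j); lia.
Qed.

Definition freq (j : Z) (t N : nat) : R := INR (cnt j t N) / INR N.

Lemma is_lim_seq_even_odd (v : nat -> R) (l : R) :
  is_lim_seq (fun n => v (2 * n)%nat) l -> is_lim_seq (fun n => v (2 * n + 1)%nat) l ->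
  is_lim_seq v l.
Proof.
  rewrite <- !is_lim_seq_spec. intros Heven Hodd eps.
  destruct (Heven eps) as [N1 H1], (Hodd eps) as [N2 H2].
  exists (2 * (N1 + N2))%nat. intros n Hn.
  destruct (Nat.Even_or_Odd n) as [[m ->]|[m ->]]; [apply H1 | apply H2]; lia.
Qed.

Lemma Rabs_ratio_step_le c e n : 0 <= c <= 2 * n -> 0 <= e <= 1 -> 1 <= n ->
  Rabs ((c + e) / (2 * n + 1) - c / (2 * n)) <= / n.
Proof.
  intros Hc He Hn.
  replace ((c + e) / (2 * n + 1) - c / (2 * n))
    with (/ n * ((2 * n * e - c) / (2 * (2 * n + 1)))) by (field; lra).
  rewrite Rabs_mult, Rabs_pos_eq by (apply Rlt_le, Rinv_0_lt_compat; lra).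
  rewrite <- (Rmult_1_r (/ n)) at 2. apply Rmult_le_compat_l; [apply Rlt_le, Rinv_0_lt_compat; lra|].
  rewrite Rabs_div, (Rabs_pos_eq (2 * _)) by lra.
  apply Rle_div_l; [lra|]. apply Rabs_le. nra.
Qed.

Lemma Rabs_freq_succ_double_le j t N : (1 <= N)%nat ->
  Rabs (freq j t (2 * N + 1) - freq j t (2 * N)) <= / INR N.
Proof.
  intros HN. unfold freq. replace (2 * N + 1)%nat with (S (2 * N)) by lia.
  cbn [cnt]. rewrite plus_INR, S_INR, mult_INR.
  pose proof (le_INR _ _ (cnt_le j t (2 * N))) as Hc. rewrite mult_INR in Hc.
  pose proof (pos_INR (cnt j t (2 * N))). pose proof (le_INR _ _ HN).
  change (INR 1) with 1 in *. change (INR 2) with 2 in *.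
  destruct (Z.eqb _ _); [change (INR 1) with 1 | change (INR 0) with 0]; apply Rabs_ratio_step_le; lra.
Qed.

Lemma is_lim_seq_freq_of_double j t (l : R) :
  is_lim_seq (fun N => freq j t (2 * N)) l -> is_lim_seq (freq j t) l.
Proof.
  intros Heven. apply is_lim_seq_even_odd; [exact Heven|].
  assert (Hinv : is_lim_seq (fun N => / INR N) 0).
  { replace (Finite 0) with (Rbar_inv p_infty) by reflexivity.
    apply is_lim_seq_inv; [apply is_lim_seq_INR | discriminate]. }
  apply is_lim_seq_le_le_loc with
    (fun N => freq j t (2 * N) - / INR N) (fun N => freq j t (2 * N) + / INR N).
  - exists 1%nat. intros N HN. apply Rabs_le_between'. now apply Rabs_freq_succ_double_le.
  - replace (Finite l) with (Finite (l - 0)) by (f_equal; ring).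
    now apply is_lim_seq_minus'.
  - replace (Finite l) with (Finite (l + 0)) by (f_equal; ring).
    now apply is_lim_seq_plus'.
Qed.

Lemma is_lim_seq_freq_0 j : is_lim_seq (freq j 0) (Finite (if Z.eqb 0 j then 1 else 0)).
Proof.
  apply is_lim_seq_ext_loc with (fun _ => if Z.eqb 0 j then 1 else 0); [|apply is_lim_seq_const].
  exists 1%nat. intros N HN. unfold freq. rewrite cnt_0.
  pose proof (le_INR _ _ HN). change (INR 1) with 1 in *.
  destruct (Z.eqb 0 j); simpl; field; lra.
Qed.

Lemma is_lim_seq_freq_double j t (l : R) :
  is_lim_seq (freq j t) l -> is_lim_seq (freq j (2 * t)) l.
Proof.
  intros Hl. apply is_lim_seq_freq_of_double.
  apply is_lim_seq_ext_loc with (freq j t); [|exact Hl].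
  exists 1%nat. intros N HN. unfold freq. rewrite cnt_double, !mult_INR.
  pose proof (le_INR _ _ HN). change (INR 1) with 1 in *. simpl. field. lra.
Qed.

Lemma is_lim_seq_freq_double_add1 j t (l1 l2 : R) :
  is_lim_seq (freq (j - 1) t) l1 -> is_lim_seq (freq (j + 1) (t + 1)) l2 ->
  is_lim_seq (freq j (2 * t + 1)) (/ 2 * l1 + / 2 * l2).
Proof.
  intros H1 H2. apply is_lim_seq_freq_of_double.
  apply is_lim_seq_ext_loc with (fun N => / 2 * freq (j - 1) t N + / 2 * freq (j + 1) (t + 1) N).
  - exists 1%nat. intros N HN. unfold freq. rewrite cnt_double_add1, plus_INR, mult_INR.
    pose proof (le_INR _ _ HN). change (INR 1) with 1 in *. simpl. field. lra.
  - apply is_lim_seq_plus'; [exact (is_lim_seq_scal_l _ _ _ H1) | exact (is_lim_seq_scal_l _ _ _ H2)].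
Qed.

(* For [t = 1] the odd recursion refers to [t + 1 = 1] itself; it is solved
   downwards in [j], starting from [cnt j 1 N = 0] for [j >= 2]. *)
Lemma ex_lim_freq_1 j : ex_finite_lim_seq (freq j 1).
Proof.
  assert (Hbig : forall j, (2 <= j)%Z -> is_lim_seq (freq j 1) 0).
  { intros i Hi. apply is_lim_seq_ext with (fun _ => 0); [|apply is_lim_seq_const].
    intros N. unfold freq. rewrite cnt_1_ge2 by exact Hi. simpl. now rewrite Rdiv_0_l. }
  assert (Hdown : forall k : nat, ex_finite_lim_seq (freq (1 - Z.of_nat k) 1)).
  { induction k as [|k [l Hl]].
    - eexists. apply (is_lim_seq_freq_double_add1 _ 0); [apply is_lim_seq_freq_0 | apply Hbig; lia].
    - eexists. apply (is_lim_seq_freq_double_add1 _ 0); [apply is_lim_seq_freq_0|].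
      replace (1 - Z.of_nat (S k) + 1)%Z with (1 - Z.of_nat k)%Z by lia. exact Hl. }
  destruct (Z_le_gt_dec 2 j) as [Hj|Hj].
  - exists 0. now apply Hbig.
  - replace j with (1 - Z.of_nat (Z.to_nat (1 - j)))%Z by lia. apply Hdown.
Qed.

Lemma ex_lim_freq j t : ex_finite_lim_seq (freq j t).
Proof.
  revert j. induction t as [t IH] using (well_founded_induction lt_wf). intros j.
  destruct (Nat.Even_or_Odd t) as [[[|m] ->]|[[|m] ->]].
  - eexists. apply is_lim_seq_freq_0.
  - destruct (IH (S m) ltac:(lia) j) as [l Hl]. exists l. now apply is_lim_seq_freq_double.
  - apply ex_lim_freq_1.
  - destruct (IH (S m) ltac:(lia) (j - 1)%Z) as [l1 H1].
    destruct (IH (S m + 1)%nat ltac:(lia) (j + 1)%Z) as [l2 H2].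
    eexists. exact (is_lim_seq_freq_double_add1 _ _ _ _ H1 H2).
Qed.

Lemma delta_of_lim j t (l : R) : is_lim_seq (freq j t) l -> delta j t = l.
Proof.
  intros Hl. unfold delta. change (fun N => INR (cnt j t N) / INR N) with (freq j t).
  now rewrite (is_lim_seq_unique _ _ Hl).
Qed.

Lemma is_lim_seq_freq_delta j t : is_lim_seq (freq j t) (delta j t).
Proof. destruct (ex_lim_freq j t) as [l Hl]. now rewrite (delta_of_lim _ _ _ Hl). Qed.

Lemma delta_0 j : delta j 0 = if Z.eqb 0 j then 1 else 0.
Proof. apply delta_of_lim, is_lim_seq_freq_0. Qed.

Lemma delta_double j t : delta j (2 * t) = delta j t.
Proof. apply delta_of_lim, is_lim_seq_freq_double, is_lim_seq_freq_delta. Qed.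

Lemma delta_double_add1 j t :
  delta j (2 * t + 1) = / 2 * delta (j - 1) t + / 2 * delta (j + 1) (t + 1).
Proof. apply delta_of_lim, is_lim_seq_freq_double_add1; apply is_lim_seq_freq_delta. Qed.

Lemma delta_ge0 j t : 0 <= delta j t.
Proof.
  apply (is_lim_seq_le (fun _ => 0) (freq j t) 0 (delta j t));
    [|apply is_lim_seq_const | apply is_lim_seq_freq_delta].
  intros N. unfold freq. destruct N; [simpl; rewrite Rdiv_0_r; lra|].
  apply Rdiv_le_0_compat; [apply pos_INR | apply lt_0_INR; lia].
Qed.

(** * Sums over [Z] and the characteristic function *)

Lemma window_indicator_sum (x : Z) K :
  sum_f_R0 (fun k => (if Z.eqb x (Z.of_nat k) then 1 else 0)
                     + (if Z.eqb x (- Z.of_nat (S k)) then 1 else 0)) K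
  = if andb (- Z.of_nat (S K) <=? x)%Z (x <=? Z.of_nat K)%Z then 1 else 0.
Proof.
  induction K as [|K IH]; [simpl | rewrite tech5, IH];
  repeat match goal with
    | |- context [Z.eqb ?a ?b] => destruct (Z.eqb_spec a b)
    | |- context [Z.leb ?a ?b] => destruct (Z.leb_spec a b)
    end; simpl; first [lra | exfalso; lia].
Qed.

Lemma cnt_window_sum_le t K N :
  sum_f_R0 (fun k => INR (cnt (Z.of_nat k) t N) + INR (cnt (- Z.of_nat (S k)) t N)) K <= INR N.
Proof.
  induction N as [|N IH].
  - rewrite sum_eq_R0; [simpl; lra | intros; simpl; lra].
  - cbn [cnt]. rewrite S_INR.
    rewrite (sum_eq _ (fun k => (INR (cnt (Z.of_nat k) t N) + INR (cnt (- Z.of_nat (S k)) t N))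
      + ((if Z.eqb (Z.of_nat (s (N + t)) - Z.of_nat (s N)) (Z.of_nat k) then 1 else 0)
         + (if Z.eqb (Z.of_nat (s (N + t)) - Z.of_nat (s N)) (- Z.of_nat (S k)) then 1 else 0))))
      by (intros k _; rewrite !plus_INR; do 2 destruct (Z.eqb _ _); simpl; ring).
    rewrite sum_plus, window_indicator_sum. destruct (andb _ _); lra.
Qed.

Lemma delta_window_sum_le1 t K :
  sum_f_R0 (fun k => delta (Z.of_nat k) t + delta (- Z.of_nat (S k)) t) K <= 1.
Proof.
  set (F N := sum_f_R0 (fun k => freq (Z.of_nat k) t N + freq (- Z.of_nat (S k)) t N) K).
  assert (HF : is_lim_seq F (sum_f_R0 (fun k => delta (Z.of_nat k) t + delta (- Z.of_nat (S k)) t) K)).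
  { unfold F. induction K as [|K IH]; cbn [sum_f_R0];
      [| apply is_lim_seq_plus'; [exact IH|]]; apply is_lim_seq_plus'; apply is_lim_seq_freq_delta. }
  refine (is_lim_seq_le_loc F (fun _ => 1) _ 1 _ HF (is_lim_seq_const 1)).
  exists 1%nat. intros N HN. pose proof (lt_0_INR N ltac:(lia)).
  unfold F, freq. rewrite (sum_eq _ (fun k =>
    (INR (cnt (Z.of_nat k) t N) + INR (cnt (- Z.of_nat (S k)) t N)) * / INR N)) by (intros; field; lra).
  rewrite <- scal_sum, Rmult_comm. apply Rle_div_l; [lra|]. rewrite Rmult_1_l. apply cnt_window_sum_le.
Qed.

Lemma ex_series_ge0_bounded (a : nat -> R) (M : R) :
  (forall k, 0 <= a k) -> (forall K, sum_f_R0 a K <= M) -> ex_series a.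
Proof.
  intros Ha HM. apply (ex_finite_lim_seq_incr (sum_n a) M).
  - intros n. rewrite !sum_n_Reals. simpl. specialize (Ha (S n)). lra.
  - intros n. rewrite sum_n_Reals. apply HM.
Qed.

Definition summableZ (f : Z -> R) : Prop :=
  ex_series (fun k => f (Z.of_nat k)) /\ ex_series (fun k => f (- Z.of_nat (S k))%Z).

Lemma ex_series_delta_halves t :
  ex_series (fun k => delta (Z.of_nat k) t) /\ ex_series (fun k => delta (- Z.of_nat (S k)) t).
Proof.
  split; apply (ex_series_ge0_bounded _ 1); try (intros; apply delta_ge0);
    intros K; eapply Rle_trans, (delta_window_sum_le1 t K); apply sum_Rle; intros n _;
    pose proof (delta_ge0 (Z.of_nat n) t); pose proof (delta_ge0 (- Z.of_nat (S n)) t); lra.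
Qed.

Lemma summableZ_le_delta t (c : R) (f : Z -> R) :
  (forall k, Rabs (f k) <= c * delta k t) -> summableZ f.
Proof.
  intros Hf. destruct (ex_series_delta_halves t) as [Hpos Hneg].
  split; eapply (ex_series_le (V := R_CompleteNormedModule)); try (intros; apply Hf);
    [exact (ex_series_scal_l c _ Hpos) | exact (ex_series_scal_l c _ Hneg)].
Qed.

Lemma summableZ_delta_mul t (g : Z -> R) :
  (forall k, Rabs (g k) <= 1) -> summableZ (fun k => delta k t * g k).
Proof.
  intros Hg. apply (summableZ_le_delta t 1). intros k.
  rewrite Rabs_mult, Rabs_pos_eq, Rmult_comm by apply delta_ge0.
  apply Rmult_le_compat_r; [apply delta_ge0 | apply Hg].
Qed.

Lemma sumZ_ext (f g : Z -> R) : (forall k, f k = g k) -> sumZ f = sumZ g.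
Proof. intros H. unfold sumZ. f_equal; now apply Series_ext. Qed.

Lemma sumZ_plus (f g : Z -> R) : summableZ f -> summableZ g ->
  sumZ (fun k => f k + g k) = sumZ f + sumZ g.
Proof.
  intros [Hf1 Hf2] [Hg1 Hg2]. unfold sumZ.
  rewrite (Series_plus _ _ Hf1 Hg1), (Series_plus _ _ Hf2 Hg2). ring.
Qed.

Lemma sumZ_scal (c : R) (f : Z -> R) : sumZ (fun k => c * f k) = c * sumZ f.
Proof. unfold sumZ. rewrite !Series_scal_l. ring. Qed.

Lemma summableZ_scal (c : R) (f : Z -> R) : summableZ f -> summableZ (fun k => c * f k).
Proof. intros [H1 H2]. split; [exact (ex_series_scal_l c _ H1) | exact (ex_series_scal_l c _ H2)]. Qed.

Lemma sumZ_pred (f : Z -> R) : summableZ f -> sumZ (fun k => f (k - 1)%Z) = sumZ f.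
Proof.
  intros [Hpos Hneg]. unfold sumZ.
  assert (Hpos' : ex_series (fun k => f (Z.of_nat k - 1)%Z)).
  { apply ex_series_incr_1. eapply ex_series_ext; [|exact Hpos]. intros n. cbv beta. f_equal. lia. }
  rewrite (Series_incr_1 _ Hpos'), (Series_incr_1 _ Hneg).
  rewrite (Series_ext (fun k => f (Z.of_nat (S k) - 1)%Z) (fun k => f (Z.of_nat k)))
    by (intros; f_equal; lia).
  rewrite (Series_ext (fun k => f (- Z.of_nat (S k) - 1)%Z) (fun k => f (- Z.of_nat (S (S k))))%Z)
    by (intros; f_equal; lia).
  replace (Z.of_nat 0 - 1)%Z with (- Z.of_nat 1)%Z by reflexivity. ring.
Qed.

Lemma sumZ_succ (f : Z -> R) : summableZ f -> sumZ (fun k => f (k + 1)%Z) = sumZ f.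
Proof.
  intros [Hpos Hneg]. unfold sumZ.
  assert (Hneg' : ex_series (fun k => f (- Z.of_nat (S k) + 1)%Z)).
  { apply ex_series_incr_1. eapply ex_series_ext; [|exact Hneg]. intros n. cbv beta. f_equal. lia. }
  rewrite (Series_incr_1 _ Hpos), (Series_incr_1 _ Hneg').
  rewrite (Series_ext (fun k => f (Z.of_nat k + 1)%Z) (fun k => f (Z.of_nat (S k))))
    by (intros; f_equal; lia).
  rewrite (Series_ext (fun k => f (- Z.of_nat (S (S k)) + 1)%Z) (fun k => f (- Z.of_nat (S k))))%Z
    by (intros; f_equal; lia).
  replace (- Z.of_nat 1 + 1)%Z with (Z.of_nat 0) by reflexivity. ring.
Qed.

Lemma sumZ_supported_0 (f : Z -> R) : (forall k, k <> 0%Z -> f k = 0) -> sumZ f = f 0%Z.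
Proof.
  intros H. unfold sumZ.
  assert (Hzero : forall a : nat -> R, (forall k, a k = 0) -> Series a = 0).
  { intros a Ha. rewrite (Series_ext _ (fun _ => 0 * 0)) by (intros; rewrite Ha; ring).
    rewrite Series_scal_l. ring. }
  rewrite (Hzero (fun k => f (- Z.of_nat (S k))%Z)) by (intros; apply H; lia).
  rewrite Series_incr_1.
  - rewrite (Hzero (fun k => f (Z.of_nat (S k)))) by (intros; apply H; lia). simpl. ring.
  - apply ex_series_incr_1, (ex_series_ge0_bounded _ 0); intros.
    + rewrite H by lia. lra.
    + rewrite sum_eq_R0; [lra | intros; apply H; lia].
Qed.

Definition cf_re (t : nat) (y : R) : R := sumZ (fun k => delta k t * cos (IZR k * y)).
Definition cf_im (t : nat) (y : R) : R := sumZ (fun k => delta k t * sin (IZR k * y)).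

Lemma charf_cf t theta : charf t theta = (cf_re t (2 * PI * theta), cf_im t (2 * PI * theta)).
Proof.
  unfold charf, cf_re, cf_im. f_equal; apply sumZ_ext; intros k; do 2 f_equal; ring.
Qed.

Lemma summableZ_delta_cos t y : summableZ (fun k => delta k t * cos (IZR k * y)).
Proof. apply summableZ_delta_mul. intros. apply Rabs_le, COS_bound. Qed.

Lemma summableZ_delta_sin t y : summableZ (fun k => delta k t * sin (IZR k * y)).
Proof. apply summableZ_delta_mul. intros. apply Rabs_le, SIN_bound. Qed.

Lemma sumZ_delta_trig t y a b :
  sumZ (fun k => delta k t * (a * cos (IZR k * y) + b * sin (IZR k * y)))
  = a * cf_re t y + b * cf_im t y.
Proof.
  rewrite (sumZ_ext _ (fun k => a * (delta k t * cos (IZR k * y)) + b * (delta k t * sin (IZR k * y))))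
    by (intros; ring).
  rewrite (sumZ_plus (fun k => a * (delta k t * cos (IZR k * y)))
                     (fun k => b * (delta k t * sin (IZR k * y)))), !sumZ_scal;
    [reflexivity | |]; apply summableZ_scal; [apply summableZ_delta_cos | apply summableZ_delta_sin].
Qed.

Lemma sumZ_delta_pred t (g : Z -> R) : (forall k, Rabs (g k) <= 1) ->
  sumZ (fun k => delta (k - 1) t * g k) = sumZ (fun k => delta k t * g (k + 1)%Z).
Proof.
  intros Hg.
  rewrite <- (sumZ_pred (fun k => delta k t * g (k + 1)%Z)) by (apply summableZ_delta_mul; auto).
  apply sumZ_ext. intros k. do 2 f_equal. lia.
Qed.

Lemma sumZ_delta_succ t (g : Z -> R) : (forall k, Rabs (g k) <= 1) ->
  sumZ (fun k => delta (k + 1) t * g k) = sumZ (fun k => delta k t * g (k - 1)%Z).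
Proof.
  intros Hg.
  rewrite <- (sumZ_succ (fun k => delta k t * g (k - 1)%Z)) by (apply summableZ_delta_mul; auto).
  apply sumZ_ext. intros k. do 2 f_equal. lia.
Qed.

Lemma cf_re_double t y : cf_re (2 * t) y = cf_re t y.
Proof. apply sumZ_ext. intros k. now rewrite delta_double. Qed.

Lemma cf_im_double t y : cf_im (2 * t) y = cf_im t y.
Proof. apply sumZ_ext. intros k. now rewrite delta_double. Qed.

Lemma sumZ_delta_double_add1 t (g : Z -> R) : (forall k, Rabs (g k) <= 1) ->
  sumZ (fun k => delta k (2 * t + 1) * g k)
  = / 2 * sumZ (fun k => delta k t * g (k + 1)%Z) + / 2 * sumZ (fun k => delta k (t + 1) * g (k - 1)%Z).
Proof.
  intros Hg. rewrite <- sumZ_delta_pred, <- sumZ_delta_succ, <- !sumZ_scal by exact Hg.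
  assert (Hdom : forall (d : Z -> R), (forall k, 0 <= d k <= 2 * delta k (2 * t + 1)) ->
                 summableZ (fun k => / 2 * (d k * g k))).
  { intros d Hd. apply (summableZ_le_delta (2 * t + 1) 1). intros k.
    specialize (Hd k). specialize (Hg k).
    rewrite !Rabs_mult, (Rabs_pos_eq (/ 2)), (Rabs_pos_eq (d k)) by lra.
    pose proof (Rabs_pos (g k)). nra. }
  rewrite <- sumZ_plus by (apply Hdom; intros k; pose proof (delta_ge0 (k - 1) t);
    pose proof (delta_ge0 (k + 1) (t + 1)); rewrite delta_double_add1; lra).
  apply sumZ_ext. intros k. rewrite delta_double_add1. ring.
Qed.

Lemma cf_re_double_add1 t y :
  cf_re (2 * t + 1) y = / 2 * (cos y * cf_re t y + - sin y * cf_im t y)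
                      + / 2 * (cos y * cf_re (t + 1) y + sin y * cf_im (t + 1) y).
Proof.
  unfold cf_re at 1. rewrite sumZ_delta_double_add1 by (intros; apply Rabs_le, COS_bound).
  rewrite <- !sumZ_delta_trig. do 2 f_equal; apply sumZ_ext; intros k; f_equal;
    rewrite ?plus_IZR, ?minus_IZR, ?Rmult_plus_distr_r, ?Rmult_minus_distr_r, Rmult_1_l,
      ?cos_plus, ?cos_minus; ring.
Qed.

Lemma cf_im_double_add1 t y :
  cf_im (2 * t + 1) y = / 2 * (sin y * cf_re t y + cos y * cf_im t y)
                      + / 2 * (- sin y * cf_re (t + 1) y + cos y * cf_im (t + 1) y).
Proof.
  unfold cf_im at 1. rewrite sumZ_delta_double_add1 by (intros; apply Rabs_le, SIN_bound).
  rewrite <- !sumZ_delta_trig. do 2 f_equal; apply sumZ_ext; intros k; f_equal;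
    rewrite ?plus_IZR, ?minus_IZR, ?Rmult_plus_distr_r, ?Rmult_minus_distr_r, Rmult_1_l,
      ?sin_plus, ?sin_minus; ring.
Qed.

Lemma cf_re_0 y : cf_re 0 y = 1.
Proof.
  unfold cf_re. rewrite sumZ_supported_0, delta_0, Rmult_0_l, cos_0; [simpl; ring|].
  intros k Hk. rewrite delta_0. destruct (Z.eqb_spec 0 k); [lia | ring].
Qed.

Lemma cf_im_0 y : cf_im 0 y = 0.
Proof.
  unfold cf_im. rewrite sumZ_supported_0, delta_0, Rmult_0_l, sin_0; [simpl; ring|].
  intros k Hk. rewrite delta_0. destruct (Z.eqb_spec 0 k); [lia | ring].
Qed.

Lemma cf_re_at_0 t : cf_re t 0 = 1.
Proof.
  induction t as [t IH] using (well_founded_induction lt_wf).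
  destruct (Nat.Even_or_Odd t) as [[[|m] ->]|[m ->]].
  - apply cf_re_0.
  - rewrite cf_re_double. apply IH. lia.
  - destruct m as [|m].
    + pose proof (cf_re_double_add1 0 0) as H. simpl in H |- *.
      rewrite cos_0, sin_0, cf_re_0 in H. lra.
    + rewrite cf_re_double_add1, cos_0, sin_0, !IH by lia. field.
Qed.

(** * Jets of order 5 at 0 *)

Lemma locally_0_iff (P : R -> Prop) :
  locally 0 P <-> exists d, 0 < d /\ forall y, Rabs y < d -> P y.
Proof.
  split.
  - intros [eps H]. exists eps. split; [apply cond_pos|]. intros y Hy. apply H.
    change (Rabs (y + - 0) < eps). now rewrite Ropp_0, Rplus_0_r.
  - intros [d [Hd H]]. exists (mkposreal d Hd). intros y Hy. apply H.
    change (Rabs (y + - 0) < d) in Hy. now rewrite Ropp_0, Rplus_0_r in Hy.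
Qed.

Lemma locally_0_Rabs_lt (d : R) : 0 < d -> locally 0 (fun y => Rabs y < d).
Proof. intros Hd. apply locally_0_iff. now exists d. Qed.

Lemma locally_0_compose (f : R -> R) (K : R) (P : R -> Prop) :
  locally 0 (fun y => Rabs (f y) <= K * Rabs y) -> locally 0 P -> locally 0 (fun y => P (f y)).
Proof.
  intros Hf HP. apply locally_0_iff in HP as [d [Hd HP]].
  assert (HK : 0 < Rabs K + 1) by (pose proof (Rabs_pos K); lra).
  assert (Hd' : 0 < d / (Rabs K + 1)) by (apply Rdiv_lt_0_compat; lra).
  generalize (filter_and _ _ Hf (locally_0_Rabs_lt _ Hd')).
  apply filter_imp. intros y [Hfy Hy]. apply HP.
  apply Rle_lt_trans with ((Rabs K + 1) * Rabs y).
  - eapply Rle_trans; [exact Hfy|]. apply Rmult_le_compat_r; [apply Rabs_pos|].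
    pose proof (Rle_abs K). lra.
  - apply Rlt_le_trans with ((Rabs K + 1) * (d / (Rabs K + 1))); [|right; field; lra].
    apply Rmult_lt_compat_l; lra.
Qed.

Lemma eq0_of_le_small (a C : R) :
  locally 0 (fun y => y <> 0 -> Rabs a <= C * Rabs y) -> a = 0.
Proof.
  intros H. apply locally_0_iff in H as [d [Hd H]].
  apply Rabs_eq_0, Rle_antisym; [|apply Rabs_pos]. apply le_epsilon. intros eps Heps.
  assert (HC : 0 < Rabs C + 1) by (pose proof (Rabs_pos C); lra).
  set (y := Rmin (d / 2) (eps / (Rabs C + 1))).
  assert (Hy : 0 < y) by (apply Rmin_pos; apply Rdiv_lt_0_compat; lra).
  assert (Hyd : y < d) by (eapply Rle_lt_trans; [apply Rmin_l | lra]).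
  assert (Hye : (Rabs C + 1) * y <= eps).
  { apply Rle_trans with ((Rabs C + 1) * (eps / (Rabs C + 1))); [|right; field; lra].
    apply Rmult_le_compat_l; [lra | apply Rmin_r]. }
  clearbody y. specialize (H y ltac:(rewrite (Rabs_pos_eq y); lra) ltac:(lra)).
  rewrite (Rabs_pos_eq y) in H by lra.
  pose proof (Rle_abs C). nra.
Qed.

Lemma Rabs_pow_le_1 y n : Rabs y <= 1 -> Rabs (y ^ n) <= 1.
Proof.
  intros Hy. rewrite <- RPow_abs. induction n as [|n IH]; simpl; [lra|].
  pose proof (pow_le _ n (Rabs_pos y)). pose proof (Rabs_pos y). nra.
Qed.

Record jet5 := Jet5 { jc0 : R; jc1 : R; jc2 : R; jc3 : R; jc4 : R; jc5 : R }.

Lemma Jet5_inj a0 a1 a2 a3 a4 a5 b0 b1 b2 b3 b4 b5 :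
  Jet5 a0 a1 a2 a3 a4 a5 = Jet5 b0 b1 b2 b3 b4 b5 ->
  a0 = b0 /\ a1 = b1 /\ a2 = b2 /\ a3 = b3 /\ a4 = b4 /\ a5 = b5.
Proof. intros H. injection H. tauto. Qed.

Definition jet_eval (p : jet5) (y : R) : R :=
  jc0 p + jc1 p * y + jc2 p * y ^ 2 + jc3 p * y ^ 3 + jc4 p * y ^ 4 + jc5 p * y ^ 5.

Definition jet_norm (p : jet5) : R :=
  Rabs (jc0 p) + Rabs (jc1 p) + Rabs (jc2 p) + Rabs (jc3 p) + Rabs (jc4 p) + Rabs (jc5 p).

Definition jet_const (a : R) : jet5 := Jet5 a 0 0 0 0 0.

Definition jet_add (p q : jet5) : jet5 :=
  Jet5 (jc0 p + jc0 q) (jc1 p + jc1 q) (jc2 p + jc2 q)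
       (jc3 p + jc3 q) (jc4 p + jc4 q) (jc5 p + jc5 q).

Definition jet_scal (a : R) (p : jet5) : jet5 :=
  Jet5 (a * jc0 p) (a * jc1 p) (a * jc2 p) (a * jc3 p) (a * jc4 p) (a * jc5 p).

Definition jet_mul (p q : jet5) : jet5 :=
  let '(Jet5 p0 p1 p2 p3 p4 p5) := p in
  let '(Jet5 q0 q1 q2 q3 q4 q5) := q in
  Jet5 (p0 * q0) (p0 * q1 + p1 * q0) (p0 * q2 + p1 * q1 + p2 * q0)
       (p0 * q3 + p1 * q2 + p2 * q1 + p3 * q0)
       (p0 * q4 + p1 * q3 + p2 * q2 + p3 * q1 + p4 * q0)
       (p0 * q5 + p1 * q4 + p2 * q3 + p3 * q2 + p4 * q1 + p5 * q0).

(* The coefficients of [y^6], ..., [y^10] in the full product, which [jet_mul] drops. *)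
Definition jet_mul_carry (p q : jet5) : jet5 :=
  Jet5 (jc1 p * jc5 q + jc2 p * jc4 q + jc3 p * jc3 q + jc4 p * jc2 q + jc5 p * jc1 q)
       (jc2 p * jc5 q + jc3 p * jc4 q + jc4 p * jc3 q + jc5 p * jc2 q)
       (jc3 p * jc5 q + jc4 p * jc4 q + jc5 p * jc3 q)
       (jc4 p * jc5 q + jc5 p * jc4 q)
       (jc5 p * jc5 q) 0.

Fixpoint jet_pow (p : jet5) (n : nat) : jet5 :=
  match n with O => jet_const 1 | S n => jet_mul p (jet_pow p n) end.

Definition jet_comp (e p : jet5) : jet5 :=
  jet_add (jet_scal (jc0 e) (jet_pow p 0)) (jet_add (jet_scal (jc1 e) (jet_pow p 1))
  (jet_add (jet_scal (jc2 e) (jet_pow p 2)) (jet_add (jet_scal (jc3 e) (jet_pow p 3))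
  (jet_add (jet_scal (jc4 e) (jet_pow p 4)) (jet_scal (jc5 e) (jet_pow p 5)))))).

Definition jet_shift (p : jet5) : jet5 := Jet5 (jc1 p) (jc2 p) (jc3 p) (jc4 p) (jc5 p) 0.

Lemma jet_eval_const a y : jet_eval (jet_const a) y = a.
Proof. unfold jet_eval; simpl. ring. Qed.

Lemma jet_eval_add p q y : jet_eval (jet_add p q) y = jet_eval p y + jet_eval q y.
Proof. unfold jet_eval; simpl. ring. Qed.

Lemma jet_eval_scal a p y : jet_eval (jet_scal a p) y = a * jet_eval p y.
Proof. unfold jet_eval; simpl. ring. Qed.

Lemma jet_eval_mul p q y :
  jet_eval p y * jet_eval q y = jet_eval (jet_mul p q) y + y ^ 6 * jet_eval (jet_mul_carry p q) y.
Proof. destruct p, q. unfold jet_eval; simpl. ring. Qed.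

Lemma jet_eval_shift p y : jet_eval p y = jc0 p + y * jet_eval (jet_shift p) y.
Proof. unfold jet_eval; simpl. ring. Qed.

Lemma jet_eval_le_norm p y : Rabs y <= 1 -> Rabs (jet_eval p y) <= jet_norm p.
Proof.
  intros Hy. unfold jet_eval, jet_norm.
  assert (Hterm : forall a n, Rabs (a * y ^ n) <= Rabs a).
  { intros a n. rewrite Rabs_mult. pose proof (Rabs_pow_le_1 y n Hy).
    pose proof (Rabs_pos a). pose proof (Rabs_pos (y ^ n)). nra. }
  pose proof (Hterm (jc1 p) 1%nat) as H1. rewrite pow_1 in H1.
  pose proof (Hterm (jc2 p) 2%nat). pose proof (Hterm (jc3 p) 3%nat).
  pose proof (Hterm (jc4 p) 4%nat). pose proof (Hterm (jc5 p) 5%nat).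
  repeat (eapply Rle_trans; [apply Rabs_triang | apply Rplus_le_compat; [|eassumption]]).
  lra.
Qed.

Lemma jet_norm_ge0 p : 0 <= jet_norm p.
Proof. unfold jet_norm. pose proof Rabs_pos. repeat apply Rplus_le_le_0_compat; auto. Qed.

Definition has_jet (f : R -> R) (p : jet5) : Prop :=
  exists M, 0 <= M /\ locally 0 (fun y => Rabs (f y - jet_eval p y) <= M * y ^ 6).

Lemma pow6_ge0 y : 0 <= y ^ 6.
Proof. replace (y ^ 6) with ((y ^ 3) ^ 2) by ring. apply pow2_ge_0. Qed.

Lemma pow6_le_1 y : Rabs y <= 1 -> y ^ 6 <= 1.
Proof.
  intros Hy. pose proof (Rabs_pow_le_1 y 6 Hy). rewrite Rabs_pos_eq in H by apply pow6_ge0. lra.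
Qed.

Lemma has_jet_near (f g : R -> R) p :
  has_jet g p -> locally 0 (fun y => f y = g y) -> has_jet f p.
Proof.
  intros [M [HM Hg]] Hfg. exists M. split; [exact HM|].
  generalize (filter_and _ _ Hg Hfg). apply filter_imp. intros y [H ->]. exact H.
Qed.

Lemma has_jet_const a : has_jet (fun _ => a) (jet_const a).
Proof.
  exists 0. split; [lra|]. apply filter_forall. intros y.
  rewrite jet_eval_const, Rminus_diag, Rabs_R0, Rmult_0_l. lra.
Qed.

Lemma has_jet_plus f g p q : has_jet f p -> has_jet g q -> has_jet (fun y => f y + g y) (jet_add p q).
Proof.
  intros [M1 [HM1 H1]] [M2 [HM2 H2]]. exists (M1 + M2). split; [lra|].
  generalize (filter_and _ _ H1 H2). apply filter_imp. intros y [Hf Hg].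
  rewrite jet_eval_add.
  replace (f y + g y - (jet_eval p y + jet_eval q y))
    with ((f y - jet_eval p y) + (g y - jet_eval q y)) by ring.
  eapply Rle_trans; [apply Rabs_triang | lra].
Qed.

Lemma has_jet_scal a f p : has_jet f p -> has_jet (fun y => a * f y) (jet_scal a p).
Proof.
  intros [M [HM H]]. exists (Rabs a * M). split; [apply Rmult_le_pos; [apply Rabs_pos | exact HM]|].
  generalize H. apply filter_imp. intros y Hy.
  rewrite jet_eval_scal, <- Rmult_minus_distr_l, Rabs_mult, Rmult_assoc.
  apply Rmult_le_compat_l; [apply Rabs_pos | exact Hy].
Qed.

Lemma Rabs_product_error_le (P Q c e1 e2 A B C M1 M2 w : R) :
  0 <= w <= 1 -> 0 <= M1 -> 0 <= M2 ->
  Rabs P <= A -> Rabs Q <= B -> Rabs c <= C -> Rabs e1 <= M1 * w -> Rabs e2 <= M2 * w ->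
  Rabs (P * e2 + e1 * Q + e1 * e2 + w * c) <= (A * M2 + M1 * B + M1 * M2 + C) * w.
Proof.
  intros Hw HM1 HM2 HP HQ Hc He1 He2.
  pose proof (Rabs_pos P). pose proof (Rabs_pos Q). pose proof (Rabs_pos e1). pose proof (Rabs_pos e2).
  pose proof (Rabs_triang (P * e2 + e1 * Q + e1 * e2) (w * c)).
  pose proof (Rabs_triang (P * e2 + e1 * Q) (e1 * e2)).
  pose proof (Rabs_triang (P * e2) (e1 * Q)).
  rewrite !Rabs_mult, (Rabs_pos_eq w) in * by lra.
  assert (Rabs P * Rabs e2 <= A * (M2 * w)) by (apply Rmult_le_compat; lra).
  assert (Rabs e1 * Rabs Q <= (M1 * w) * B) by (apply Rmult_le_compat; lra).
  assert (Rabs e1 * Rabs e2 <= M1 * M2 * w).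
  { apply Rle_trans with ((M1 * w) * (M2 * w)); [apply Rmult_le_compat; lra|].
    replace (M1 * w * (M2 * w)) with (M1 * M2 * w * w) by ring.
    rewrite <- (Rmult_1_r (M1 * M2 * w)) at 2. apply Rmult_le_compat_l; [|lra].
    apply Rmult_le_pos; [apply Rmult_le_pos|]; lra. }
  assert (w * Rabs c <= w * C) by (apply Rmult_le_compat_l; lra).
  lra.
Qed.

Lemma has_jet_mul f g p q : has_jet f p -> has_jet g q -> has_jet (fun y => f y * g y) (jet_mul p q).
Proof.
  intros [M1 [HM1 H1]] [M2 [HM2 H2]].
  exists (jet_norm p * M2 + M1 * jet_norm q + M1 * M2 + jet_norm (jet_mul_carry p q)).
  split; [pose proof (jet_norm_ge0 p); pose proof (jet_norm_ge0 q);
          pose proof (jet_norm_ge0 (jet_mul_carry p q)); nra|].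
  generalize (filter_and _ _ (filter_and _ _ H1 H2) (locally_0_Rabs_lt 1 Rlt_0_1)).
  apply filter_imp. intros y [[Hf Hg] Hy].
  replace (f y * g y - jet_eval (jet_mul p q) y) with
    (jet_eval p y * (g y - jet_eval q y) + (f y - jet_eval p y) * jet_eval q y
     + (f y - jet_eval p y) * (g y - jet_eval q y) + y ^ 6 * jet_eval (jet_mul_carry p q) y)
    by (rewrite <- (Rplus_minus_r (jet_eval (jet_mul p q) y) (y ^ 6 * jet_eval (jet_mul_carry p q) y)),
          <- jet_eval_mul; ring).
  apply Rabs_product_error_le; auto using jet_eval_le_norm, Rlt_le.
  split; [apply pow6_ge0 | apply pow6_le_1; lra].
Qed.

Lemma has_jet_pow f p n : has_jet f p -> has_jet (fun y => f y ^ n) (jet_pow p n).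
Proof.
  intros H. induction n as [|n IH]; [exact (has_jet_const 1)|].
  now apply (has_jet_mul f (fun y => f y ^ n)).
Qed.

Lemma pow6_le_Rabs y : Rabs y <= 1 -> y ^ 6 <= Rabs y.
Proof.
  intros Hy. rewrite <- (Rabs_pos_eq (y ^ 6)) by apply pow6_ge0. rewrite <- RPow_abs.
  change (Rabs y ^ 6) with (Rabs y * Rabs y ^ 5). rewrite RPow_abs.
  pose proof (Rabs_pow_le_1 y 5 Hy). pose proof (Rabs_pos y). nra.
Qed.

Lemma has_jet_le_linear f p : has_jet f p -> jc0 p = 0 ->
  exists K, 0 <= K /\ locally 0 (fun y => Rabs (f y) <= K * Rabs y).
Proof.
  intros [M [HM H]] H0. exists (M + jet_norm (jet_shift p)).
  split; [pose proof (jet_norm_ge0 (jet_shift p)); lra|].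
  generalize (filter_and _ _ H (locally_0_Rabs_lt 1 Rlt_0_1)). apply filter_imp. intros y [Hf Hy].
  rewrite jet_eval_shift, H0, Rplus_0_l in Hf.
  pose proof (Rabs_triang (f y - y * jet_eval (jet_shift p) y) (y * jet_eval (jet_shift p) y)).
  rewrite Rplus_comm, Rplus_minus, Rabs_mult in H1.
  pose proof (jet_eval_le_norm (jet_shift p) y ltac:(lra)).
  pose proof (pow6_le_Rabs y ltac:(lra)). pose proof (Rabs_pos y). nra.
Qed.

Lemma has_jet_comp g e f p : has_jet g e -> has_jet f p -> jc0 p = 0 ->
  has_jet (fun y => g (f y)) (jet_comp e p).
Proof.
  intros [Me [HMe Hg]] Hf H0.
  assert (Hpoly : has_jet (fun y => jet_eval e (f y)) (jet_comp e p)).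
  { apply has_jet_near with (fun y => jc0 e * f y ^ 0 + (jc1 e * f y ^ 1 + (jc2 e * f y ^ 2
      + (jc3 e * f y ^ 3 + (jc4 e * f y ^ 4 + jc5 e * f y ^ 5))))).
    - repeat apply has_jet_plus; apply has_jet_scal, has_jet_pow, Hf.
    - apply filter_forall. intros y. unfold jet_eval. ring. }
  destruct Hpoly as [M [HM Hpoly]].
  destruct (has_jet_le_linear f p Hf H0) as [K [HK Hlin]].
  exists (M + Me * K ^ 6). split; [pose proof (pow_le K 6 HK); nra|].
  generalize (filter_and _ _ (filter_and _ _ Hpoly Hlin) (locally_0_compose f K _ Hlin Hg)).
  apply filter_imp. intros y [[Hp Hl] Hc].
  assert (Hf6 : f y ^ 6 <= K ^ 6 * y ^ 6).
  { rewrite <- (Rabs_pos_eq (f y ^ 6)), <- RPow_abs by apply pow6_ge0.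
    rewrite <- (Rabs_pos_eq (y ^ 6)), <- RPow_abs, <- Rpow_mult_distr by apply pow6_ge0.
    apply pow_incr. split; [apply Rabs_pos | exact Hl]. }
  pose proof (Rabs_triang (g (f y) - jet_eval e (f y)) (jet_eval e (f y) - jet_eval (jet_comp e p) y)).
  replace (g (f y) - jet_eval e (f y) + (jet_eval e (f y) - jet_eval (jet_comp e p) y))
    with (g (f y) - jet_eval (jet_comp e p) y) in H by ring.
  pose proof (Rmult_le_compat_l Me _ _ HMe Hf6). nra.
Qed.

Lemma jet_shift_small p M n :
  locally 0 (fun y => y <> 0 -> Rabs (jet_eval p y) <= M * Rabs y ^ S n) ->
  jc0 p = 0 /\ locally 0 (fun y => y <> 0 -> Rabs (jet_eval (jet_shift p) y) <= M * Rabs y ^ n).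
Proof.
  intros H.
  assert (H0 : jc0 p = 0).
  { apply (eq0_of_le_small _ (Rabs M + jet_norm (jet_shift p))).
    generalize (filter_and _ _ H (locally_0_Rabs_lt 1 Rlt_0_1)). apply filter_imp.
    intros y [Hp Hy] Hy0. specialize (Hp Hy0).
    rewrite jet_eval_shift in Hp.
    set (e := jet_eval (jet_shift p) y) in *.
    assert (Htri : Rabs (jc0 p) <= Rabs (jc0 p + y * e) + Rabs y * Rabs e).
    { rewrite <- Rabs_mult, <- (Rabs_Ropp (y * e)).
      replace (jc0 p) with ((jc0 p + y * e) + - (y * e)) at 1 by ring. apply Rabs_triang. }
    pose proof (jet_eval_le_norm (jet_shift p) y ltac:(lra)) as He. fold e in He.
    pose proof (Rabs_pow_le_1 y n ltac:(lra)) as Hn. rewrite <- RPow_abs in Hn.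
    pose proof (pow_le _ n (Rabs_pos y)). pose proof (Rabs_pos y).
    assert (HM : M * (Rabs y * Rabs y ^ n) <= Rabs M * Rabs y).
    { apply Rle_trans with (Rabs M * (Rabs y * Rabs y ^ n)).
      - apply Rmult_le_compat_r; [nra | apply Rle_abs].
      - apply Rmult_le_compat_l; [apply Rabs_pos | nra]. }
    assert (Rabs y * Rabs e <= Rabs y * jet_norm (jet_shift p)) by (apply Rmult_le_compat_l; lra).
    simpl in Hp. lra. }
  split; [exact H0|]. generalize H. apply filter_imp. intros y Hp Hy0. specialize (Hp Hy0).
  rewrite jet_eval_shift, H0, Rplus_0_l, Rabs_mult in Hp. simpl in Hp.
  apply Rmult_le_reg_l with (Rabs y); [now apply Rabs_pos_lt|]. lra.
Qed.

Lemma jet_eq0_of_small p M :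
  locally 0 (fun y => Rabs (jet_eval p y) <= M * y ^ 6) -> p = Jet5 0 0 0 0 0 0.
Proof.
  intros H.
  assert (H6 : locally 0 (fun y => y <> 0 -> Rabs (jet_eval p y) <= M * Rabs y ^ 6)).
  { generalize H. apply filter_imp. intros y Hy _.
    now rewrite RPow_abs, (Rabs_pos_eq (y ^ 6)) by apply pow6_ge0. }
  destruct (jet_shift_small _ _ _ H6) as [E0 H5].
  destruct (jet_shift_small _ _ _ H5) as [E1 H4].
  destruct (jet_shift_small _ _ _ H4) as [E2 H3].
  destruct (jet_shift_small _ _ _ H3) as [E3 H2].
  destruct (jet_shift_small _ _ _ H2) as [E4 H1].
  destruct (jet_shift_small _ _ _ H1) as [E5 _].
  destruct p; simpl in *. now subst.
Qed.

Lemma has_jet_unique f p q : has_jet f p -> has_jet f q -> p = q.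
Proof.
  intros [M1 [_ H1]] [M2 [_ H2]].
  assert (Hdiff : jet_add p (jet_scal (-1) q) = Jet5 0 0 0 0 0 0).
  { apply (jet_eq0_of_small _ (M1 + M2)).
    generalize (filter_and _ _ H1 H2). apply filter_imp. intros y [Hp Hq].
    rewrite jet_eval_add, jet_eval_scal.
    replace (jet_eval p y + -1 * jet_eval q y)
      with (- (f y - jet_eval p y) + (f y - jet_eval q y)) by ring.
    eapply Rle_trans; [apply Rabs_triang|]. rewrite Rabs_Ropp. lra. }
  destruct p, q. unfold jet_add, jet_scal in Hdiff. simpl in Hdiff. injection Hdiff as.
  f_equal; lra.
Qed.

Lemma CV_radius_decr_n a n : CV_radius (PS_decr_n a n) = CV_radius a.
Proof.
  induction n as [|n IH]; [apply CV_radius_ext; reflexivity|].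
  rewrite <- IH, <- (CV_radius_decr_1 (PS_decr_n a n)). apply CV_radius_ext.
  intros k. unfold PS_decr_n, PS_decr_1. f_equal. lia.
Qed.

Lemma locally_0_bounded (f : R -> R) : continuity_pt f 0 ->
  exists B, locally 0 (fun y => Rabs (f y) <= B).
Proof.
  intros Hf. apply continuity_pt_filterlim in Hf.
  exists (Rabs (f 0) + 1). generalize (proj1 (filterlim_locally f (f 0)) Hf (mkposreal 1 Rlt_0_1)).
  apply filter_imp.
  intros y Hy. change (Rabs (f y + - f 0) < 1) in Hy.
  pose proof (Rabs_triang_inv (f y) (f 0)). unfold Rminus in *. lra.
Qed.

Definition jet_of (a : nat -> R) : jet5 :=
  Jet5 (a 0%nat) (a 1%nat) (a 2%nat) (a 3%nat) (a 4%nat) (a 5%nat).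

Lemma has_jet_PSeries a : Rbar_lt 0 (CV_radius a) -> has_jet (PSeries a) (jet_of a).
Proof.
  intros Ha.
  assert (Hrest : continuity_pt (PSeries (PS_decr_n a 6)) 0).
  { apply PSeries_continuity. now rewrite Rabs_R0, CV_radius_decr_n. }
  destruct (locally_0_bounded _ Hrest) as [B HB].
  assert (Hdisk : exists d, 0 < d /\ Rbar_le d (CV_radius a)).
  { destruct (CV_radius a) as [r| |]; simpl in Ha; try contradiction;
      [exists r | exists 1]; split; simpl; first [lra | exact I]. }
  destruct Hdisk as [d [Hd Hdr]].
  exists (Rabs B). split; [apply Rabs_pos|].
  generalize (filter_and _ _ HB (locally_0_Rabs_lt d Hd)). apply filter_imp. intros y [Hy Hyd].
  rewrite (PSeries_decr_n a 5 y)
    by (apply CV_radius_inside, (Rbar_lt_le_trans _ (Finite d)); [exact Hyd | exact Hdr]).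
  replace (sum_f_R0 (fun k => a k * y ^ k) 5 + y ^ 6 * PSeries (PS_decr_n a 6) y
           - jet_eval (jet_of a) y)
    with (y ^ 6 * PSeries (PS_decr_n a 6) y) by (unfold jet_eval; simpl; ring).
  rewrite Rabs_mult, Rabs_pos_eq, Rmult_comm by apply pow6_ge0.
  apply Rmult_le_compat_r; [apply pow6_ge0 | eapply Rle_trans; [exact Hy | apply Rle_abs]].
Qed.

Definition jet_exp : jet5 := Jet5 1 1 (/ 2) (/ 6) (/ 24) (/ 120).
Definition jet_cos : jet5 := Jet5 1 0 (- / 2) 0 (/ 24) 0.
Definition jet_sin : jet5 := Jet5 0 1 0 (- / 6) 0 (/ 120).

Lemma has_jet_exp : has_jet exp jet_exp.
Proof.
  apply has_jet_near with (PSeries (fun n => / INR (fact n))); [|apply filter_forall, exp_Reals].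
  replace jet_exp with (jet_of (fun n => / INR (fact n)))
    by (unfold jet_of, jet_exp; simpl; f_equal; field).
  apply has_jet_PSeries.
  apply Rbar_lt_le_trans with 1; [simpl; lra|].
  apply CV_radius_bounded. exists 1. intros n.
  rewrite pow1, Rmult_1_r, Rabs_pos_eq by (apply Rlt_le, Rinv_0_lt_compat, INR_fact_lt_0).
  rewrite <- Rinv_1. apply Rinv_le_contravar; [lra|].
  apply (le_INR 1), Factorial.lt_O_fact.
Qed.

Lemma div_INR_fact_le x n : 0 <= x -> 0 <= x / INR (fact n) <= x.
Proof.
  intros Hx. pose proof (le_INR _ _ (Factorial.lt_O_fact n)). change (INR 1) with 1 in H.
  split; [apply Rdiv_le_0_compat; lra|]. apply Rle_div_l; [lra|]. nra.
Qed.

Lemma has_jet_cos : has_jet cos jet_cos.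
Proof.
  exists 1. split; [lra|]. generalize (locally_0_Rabs_lt 1 Rlt_0_1). apply filter_imp.
  intros a Ha. apply Rabs_lt_between in Ha. pose proof PI2_1.
  destruct (cos_bound a 1 ltac:(lra) ltac:(lra)) as [L U].
  assert (H6 : 0 <= a ^ 6) by apply pow6_ge0.
  assert (H8 : 0 <= a ^ 8 <= a ^ 6).
  { replace (a ^ 8) with (a ^ 6 * a ^ 2) by ring. assert (0 <= a ^ 2 <= 1) by nra. nra. }
  pose proof (div_INR_fact_le _ 6 H6). pose proof (div_INR_fact_le _ 8 (proj1 H8)).
  unfold cos_approx, cos_term in L, U. cbn [sum_f_R0 Nat.mul Nat.add] in L, U.
  replace (INR (fact 0)) with 1 in L, U by reflexivity.
  replace (INR (fact 2)) with 2 in L, U by (simpl; ring).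
  replace (INR (fact 4)) with 24 in L, U by (simpl; ring).
  unfold jet_eval, jet_cos; simpl jc0; simpl jc1; simpl jc2; simpl jc3; simpl jc4; simpl jc5.
  cbn [pow] in *. apply Rabs_le. lra.
Qed.

Lemma sin_taylor_le a : 0 <= a < 1 -> Rabs (sin a - jet_eval jet_sin a) <= a ^ 6.
Proof.
  intros Ha. pose proof PI2_1.
  destruct (sin_bound a 1 ltac:(lra) ltac:(lra)) as [L U].
  assert (H6 : 0 <= a ^ 6) by apply pow6_ge0.
  assert (H7 : 0 <= a ^ 7 <= a ^ 6).
  { replace (a ^ 7) with (a ^ 6 * a) by ring. nra. }
  assert (H9 : 0 <= a ^ 9 <= a ^ 6).
  { replace (a ^ 9) with (a ^ 6 * a ^ 3) by ring. assert (0 <= a ^ 3 <= 1) by (simpl; nra). nra. }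
  pose proof (div_INR_fact_le _ 7 (proj1 H7)). pose proof (div_INR_fact_le _ 9 (proj1 H9)).
  unfold sin_approx, sin_term in L, U. cbn [sum_f_R0 Nat.mul Nat.add] in L, U.
  replace (INR (fact 1)) with 1 in L, U by reflexivity.
  replace (INR (fact 3)) with 6 in L, U by (simpl; ring).
  replace (INR (fact 5)) with 120 in L, U by (simpl; ring).
  unfold jet_eval, jet_sin; simpl jc0; simpl jc1; simpl jc2; simpl jc3; simpl jc4; simpl jc5.
  cbn [pow] in *. apply Rabs_le. lra.
Qed.

Lemma has_jet_sin : has_jet sin jet_sin.
Proof.
  exists 1. split; [lra|]. generalize (locally_0_Rabs_lt 1 Rlt_0_1). apply filter_imp.
  intros a Ha. rewrite Rmult_1_l. apply Rabs_lt_between in Ha.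
  destruct (Rle_lt_dec 0 a) as [Hpos|Hneg]; [apply sin_taylor_le; lra|].
  pose proof (sin_taylor_le (- a) ltac:(lra)) as H.
  rewrite sin_neg in H. replace ((- a) ^ 6) with (a ^ 6) in H by ring.
  replace (- sin a - jet_eval jet_sin (- a)) with (- (sin a - jet_eval jet_sin a)) in H
    by (unfold jet_eval, jet_sin; simpl; ring).
  now rewrite Rabs_Ropp in H.
Qed.

(** * The cumulant series *)

Fixpoint ipow (j : nat) : R * R :=
  match j with O => (1, 0) | S j => (- snd (ipow j), fst (ipow j)) end.

Lemma pow_n_imaginary (y : R) j :
  pow_n (K := C_Ring) ((0, y) : C) j = (fst (ipow j) * y ^ j, snd (ipow j) * y ^ j).
Proof.
  induction j as [|j IH]; [simpl; now rewrite Rmult_1_l, Rmult_0_l|].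
  change (pow_n (K := C_Ring) ((0, y) : C) (S j))
    with (Cmult (0, y) (pow_n (K := C_Ring) ((0, y) : C) j)).
  rewrite IH. unfold Cmult. simpl. f_equal; ring.
Qed.

Lemma sum_n_fst_snd (a : nat -> C) n :
  sum_n (G := C_NormedModule) a n = (sum_n (fun k => fst (a k)) n, sum_n (fun k => snd (a k)) n).
Proof.
  induction n as [|n IH]; [rewrite !sum_O; now destruct (a 0%nat)|].
  rewrite !sum_Sn, IH. reflexivity.
Qed.

Lemma is_series_fst_snd (a : nat -> C) (l : C) :
  is_series (K := C_AbsRing) (V := C_NormedModule) a l ->
  is_series (fun n => fst (a n)) (fst l) /\ is_series (fun n => snd (a n)) (snd l).
Proof.
  intros H. split; intros P [eps HP]; unfold is_series, filterlim, filter_le, filtermap in H;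
  [ assert (Hl : locally (T := C_NormedModule) l (fun z : C => P (fst z)))
  | assert (Hl : locally (T := C_NormedModule) l (fun z : C => P (snd z))) ];
  try (exists eps; intros z [Hz1 Hz2]; now apply HP);
  destruct (H _ Hl) as [N HN]; exists N; intros n Hn; specialize (HN n Hn);
  rewrite sum_n_fst_snd in HN; exact HN.
Qed.

(* Real and imaginary parts of the coefficients of the cumulant series
   [sum_j kappa_j (i y)^j / j!]; [ipow j] is [i^j]. *)
Definition log_cf_re (kappa : nat -> R) (j : nat) : R := kappa j / INR (fact j) * fst (ipow j).
Definition log_cf_im (kappa : nat -> R) (j : nat) : R := kappa j / INR (fact j) * snd (ipow j).

Lemma is_series_PSeries (a : nat -> R) y l : is_series (fun j => a j * y ^ j) l -> PSeries a y = l.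
Proof.
  intros H. apply is_pseries_unique. unfold is_pseries.
  eapply is_series_ext; [|exact H]. intros n. cbv beta.
  change (scal (pow_n y n) (a n)) with (pow_n (K := R_AbsRing) y n * a n).
  replace (pow_n (K := R_AbsRing) y n) with (y ^ n) by (symmetry; apply pow_n_pow).
  apply Rmult_comm.
Qed.

Lemma CV_radius_ge_of_series (a : nat -> R) y l :
  is_series (fun j => a j * y ^ j) l -> Rbar_le y (CV_radius a).
Proof.
  intros H.
  destruct (filterlim_bounded (K := R_AbsRing) (V := R_NormedModule) (fun j => a j * y ^ j)) as [M HM].
  { exists 0. apply ex_series_lim_0. now exists l. }
  apply CV_radius_bounded. now exists M.
Qed.

Lemma cf_log_representation t kappa : is_cumulants t kappa ->
  Rbar_lt 0 (CV_radius (log_cf_re kappa)) /\ Rbar_lt 0 (CV_radius (log_cf_im kappa)) /\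
  locally 0 (fun y =>
    cf_re t y = exp (PSeries (log_cf_re kappa) y) * cos (PSeries (log_cf_im kappa) y) /\
    cf_im t y = exp (PSeries (log_cf_re kappa) y) * sin (PSeries (log_cf_im kappa) y)).
Proof.
  intros [r [Hr H]]. pose proof PI_RGT_0.
  assert (Hrep : forall y, Rabs y < 2 * PI * r ->
    exists L : C, is_series (fun j => log_cf_re kappa j * y ^ j) (fst L) /\
                  is_series (fun j => log_cf_im kappa j * y ^ j) (snd L) /\
                  cexp L = (cf_re t y, cf_im t y)).
  { intros y Hy.
    assert (Hth : Rabs (y / (2 * PI)) < r).
    { rewrite Rabs_div, (Rabs_pos_eq (2 * PI)) by lra. apply Rlt_div_l; lra. }
    destruct (H _ Hth) as [L [HL HcL]].
    replace (2 * PI * (y / (2 * PI))) with y in HL by (field; lra).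
    destruct (is_series_fst_snd _ _ HL) as [HLre HLim].
    exists L. repeat split.
    - eapply is_series_ext; [|exact HLre]. intros j. cbv beta. rewrite pow_n_imaginary.
      unfold log_cf_re. simpl. ring.
    - eapply is_series_ext; [|exact HLim]. intros j. cbv beta. rewrite pow_n_imaginary.
      unfold log_cf_im. simpl. ring.
    - rewrite HcL, charf_cf. do 2 f_equal; field; lra. }
  assert (HPr : 0 < PI * r) by nra.
  destruct (Hrep (PI * r) ltac:(rewrite Rabs_pos_eq; nra)) as [L0 [Hre0 [Him0 _]]].
  split; [|split].
  - eapply Rbar_lt_le_trans; [|exact (CV_radius_ge_of_series _ _ _ Hre0)]. exact HPr.
  - eapply Rbar_lt_le_trans; [|exact (CV_radius_ge_of_series _ _ _ Him0)]. exact HPr.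
  - generalize (locally_0_Rabs_lt (2 * PI * r) ltac:(nra)). apply filter_imp. intros y Hy.
    destruct (Hrep y Hy) as [L [Hre [Him HL]]].
    rewrite (is_series_PSeries _ _ _ Hre), (is_series_PSeries _ _ _ Him).
    unfold cexp in HL. injection HL as <- <-. split; reflexivity.
Qed.

Lemma cumulant0_eq0 t kappa : is_cumulants t kappa -> kappa 0%nat = 0.
Proof.
  intros H. destruct (cf_log_representation t kappa H) as [_ [_ Hrep]].
  destruct (locally_singleton _ _ Hrep) as [H0 _].
  rewrite cf_re_at_0, !PSeries_0 in H0. unfold log_cf_re, log_cf_im in H0. simpl in H0.
  rewrite Rmult_0_r, cos_0, Rdiv_1_r, !Rmult_1_r in H0.
  rewrite <- (ln_exp (kappa 0%nat)), <- H0. apply ln_1.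
Qed.

Definition cf_jet_re (kappa : nat -> R) : jet5 :=
  jet_mul (jet_comp jet_exp (jet_of (log_cf_re kappa))) (jet_comp jet_cos (jet_of (log_cf_im kappa))).
Definition cf_jet_im (kappa : nat -> R) : jet5 :=
  jet_mul (jet_comp jet_exp (jet_of (log_cf_re kappa))) (jet_comp jet_sin (jet_of (log_cf_im kappa))).

Lemma has_jet_cf t kappa : is_cumulants t kappa ->
  has_jet (cf_re t) (cf_jet_re kappa) /\ has_jet (cf_im t) (cf_jet_im kappa).
Proof.
  intros H. pose proof (cumulant0_eq0 t kappa H) as H0.
  destruct (cf_log_representation t kappa H) as [Hre [Him Hrep]].
  assert (Hre0 : jc0 (jet_of (log_cf_re kappa)) = 0)
    by (simpl; unfold log_cf_re; now rewrite H0, Rdiv_0_l, Rmult_0_l).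
  assert (Him0 : jc0 (jet_of (log_cf_im kappa)) = 0)
    by (simpl; unfold log_cf_im; now rewrite Rmult_0_r).
  pose proof (has_jet_comp _ _ _ _ has_jet_exp (has_jet_PSeries _ Hre) Hre0) as Hexp.
  split; eapply has_jet_near; try (apply has_jet_mul; [exact Hexp|]);
    try apply (has_jet_comp _ _ _ _ has_jet_cos (has_jet_PSeries _ Him) Him0);
    try apply (has_jet_comp _ _ _ _ has_jet_sin (has_jet_PSeries _ Him) Him0);
    generalize Hrep; apply filter_imp; intros y [Hy1 Hy2]; assumption.
Qed.

(* Only meaningful for [j <= 5]; the value [0] for larger [j] is a placeholder. *)
Definition moment (k : nat -> R) (j : nat) : R :=
  match j with
  | 0 => 1
  | 1 => k 1%nat
  | 2 => k 2%nat + k 1%nat ^ 2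
  | 3 => k 3%nat + 3 * k 1%nat * k 2%nat + k 1%nat ^ 3
  | 4 => k 4%nat + 4 * k 1%nat * k 3%nat + 3 * k 2%nat ^ 2 + 6 * k 1%nat ^ 2 * k 2%nat + k 1%nat ^ 4
  | 5 => k 5%nat + 5 * k 1%nat * k 4%nat + 10 * k 2%nat * k 3%nat + 10 * k 1%nat ^ 2 * k 3%nat
         + 15 * k 1%nat * k 2%nat ^ 2 + 10 * k 1%nat ^ 3 * k 2%nat + k 1%nat ^ 5
  | _ => 0
  end.

Arguments moment : simpl never.

Lemma jet_of_log_cf_re k : jet_of (log_cf_re k) = Jet5 (k 0%nat) 0 (- k 2%nat / 2) 0 (k 4%nat / 24) 0.
Proof. unfold jet_of, log_cf_re. simpl. f_equal; field. Qed.

Lemma jet_of_log_cf_im k : jet_of (log_cf_im k) = Jet5 0 (k 1%nat) 0 (- k 3%nat / 6) 0 (k 5%nat / 120).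
Proof. unfold jet_of, log_cf_im. simpl. f_equal; field. Qed.

Lemma cf_jet_re_moments k : k 0%nat = 0 ->
  cf_jet_re k = Jet5 1 0 (- moment k 2 / 2) 0 (moment k 4 / 24) 0.
Proof.
  intros H0. unfold cf_jet_re. rewrite jet_of_log_cf_re, jet_of_log_cf_im, H0.
  unfold jet_comp, jet_exp, jet_cos, moment. simpl.
  f_equal; field.
Qed.

Lemma cf_jet_im_moments k : k 0%nat = 0 ->
  cf_jet_im k = Jet5 0 (moment k 1) 0 (- moment k 3 / 6) 0 (moment k 5 / 120).
Proof.
  intros H0. unfold cf_jet_im. rewrite jet_of_log_cf_re, jet_of_log_cf_im, H0.
  unfold jet_comp, jet_exp, jet_sin, moment. simpl.
  f_equal; field.
Qed.

Definition cf_jet_re_double_add1 (a b : nat -> R) : jet5 :=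
  jet_add
    (jet_scal (/ 2) (jet_add (jet_mul jet_cos (cf_jet_re a)) (jet_scal (-1) (jet_mul jet_sin (cf_jet_im a)))))
    (jet_scal (/ 2) (jet_add (jet_mul jet_cos (cf_jet_re b)) (jet_mul jet_sin (cf_jet_im b)))).
Definition cf_jet_im_double_add1 (a b : nat -> R) : jet5 :=
  jet_add
    (jet_scal (/ 2) (jet_add (jet_mul jet_sin (cf_jet_re a)) (jet_mul jet_cos (cf_jet_im a))))
    (jet_scal (/ 2) (jet_add (jet_scal (-1) (jet_mul jet_sin (cf_jet_re b))) (jet_mul jet_cos (cf_jet_im b)))).

Definition jump2 (d2 : R) : R := 1 + d2 / 2.
Definition jump3 (d2 d3 : R) : R := d3 / 2 - 3 * d2 / 2.
Definition jump4 (d2 d3 d4 : R) : R := d4 / 2 - 2 * d3 + 3 * d2 ^ 2 / 4 - 2.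
Definition jump5 (d2 d3 d4 d5 : R) : R := d5 / 2 - 5 * d4 / 2 + 5 * d2 * d3 / 2 + 10 * d2.

Definition in_box (x2 x3 x4 x5 : R) : Prop :=
  Rabs x2 <= 2 /\ Rabs x3 <= 6 /\ Rabs x4 <= 28 /\ Rabs x5 <= 240.

Lemma in_box_jump d2 d3 d4 d5 : in_box d2 d3 d4 d5 ->
  in_box (jump2 d2) (jump3 d2 d3) (jump4 d2 d3 d4) (jump5 d2 d3 d4 d5) /\
  in_box (d2 - jump2 d2) (d3 - jump3 d2 d3) (d4 - jump4 d2 d3 d4) (d5 - jump5 d2 d3 d4 d5).
Proof.
  unfold in_box, jump2, jump3, jump4, jump5. intros (B2 & B3 & B4 & B5).
  apply Rabs_le_between in B2, B3, B4, B5.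
  assert (0 <= d2 ^ 2 <= 4) by nra. assert (- 12 <= d2 * d3 <= 12) by nra.
  repeat split; apply Rabs_le; nra.
Qed.

Section Recursion.

Variable kappa : nat -> nat -> R.
Hypothesis Hkappa : forall t, is_cumulants t (kappa t).

Let kappa0_eq0 t : kappa t 0%nat = 0 := cumulant0_eq0 t (kappa t) (Hkappa t).

Lemma moments_double t j : (1 <= j <= 5)%nat -> moment (kappa (2 * t)%nat) j = moment (kappa t) j.
Proof.
  intros Hj.
  destruct (has_jet_cf _ _ (Hkappa t)) as [Hre Him].
  destruct (has_jet_cf _ _ (Hkappa (2 * t)%nat)) as [Hre2 Him2].
  pose proof (has_jet_unique _ _ _ Hre2 (has_jet_near _ _ _ Hre (filter_forall _ (cf_re_double t))))
    as Ere.
  pose proof (has_jet_unique _ _ _ Him2 (has_jet_near _ _ _ Him (filter_forall _ (cf_im_double t))))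
    as Eim.
  rewrite !cf_jet_re_moments in Ere by apply kappa0_eq0.
  rewrite !cf_jet_im_moments in Eim by apply kappa0_eq0.
  destruct (Jet5_inj _ _ _ _ _ _ _ _ _ _ _ _ Ere) as (_ & _ & E2 & _ & E4 & _).
  destruct (Jet5_inj _ _ _ _ _ _ _ _ _ _ _ _ Eim) as (_ & E1 & _ & E3 & _ & E5).
  destruct j as [|[|[|[|[|[|j]]]]]]; try lia; lra.
Qed.

(* Binomial expansion of the moments of the even mixture of [X_t + 1] and
   [X_(t+1) - 1], where [X_u] has distribution [delta(., u)]. *)
Lemma moments_double_add1 t :
  let a := moment (kappa t) in let b := moment (kappa (t + 1)%nat) in
  let c := moment (kappa (2 * t + 1)%nat) in
  c 1%nat = / 2 * (a 1%nat + b 1%nat) /\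
  c 2%nat = / 2 * (a 2%nat + 2 * a 1%nat + 1 + b 2%nat - 2 * b 1%nat + 1) /\
  c 3%nat = / 2 * (a 3%nat + 3 * a 2%nat + 3 * a 1%nat + 1 + b 3%nat - 3 * b 2%nat + 3 * b 1%nat - 1) /\
  c 4%nat = / 2 * (a 4%nat + 4 * a 3%nat + 6 * a 2%nat + 4 * a 1%nat + 1
                  + b 4%nat - 4 * b 3%nat + 6 * b 2%nat - 4 * b 1%nat + 1) /\
  c 5%nat = / 2 * (a 5%nat + 5 * a 4%nat + 10 * a 3%nat + 10 * a 2%nat + 5 * a 1%nat + 1
                  + b 5%nat - 5 * b 4%nat + 10 * b 3%nat - 10 * b 2%nat + 5 * b 1%nat - 1).
Proof.
  intros a b c.
  destruct (has_jet_cf _ _ (Hkappa t)) as [Hre_a Him_a].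
  destruct (has_jet_cf _ _ (Hkappa (t + 1)%nat)) as [Hre_b Him_b].
  destruct (has_jet_cf _ _ (Hkappa (2 * t + 1)%nat)) as [Hre_c Him_c].
  assert (Hre : has_jet (cf_re (2 * t + 1)) (cf_jet_re_double_add1 (kappa t) (kappa (t + 1)%nat))).
  { apply has_jet_near with (fun y => / 2 * (cos y * cf_re t y + -1 * (sin y * cf_im t y))
                                    + / 2 * (cos y * cf_re (t + 1) y + sin y * cf_im (t + 1) y)).
    - repeat first [apply has_jet_plus | apply has_jet_scal | apply has_jet_mul];
        auto using has_jet_cos, has_jet_sin.
    - apply filter_forall. intros y. rewrite cf_re_double_add1. ring. }
  assert (Him : has_jet (cf_im (2 * t + 1)) (cf_jet_im_double_add1 (kappa t) (kappa (t + 1)%nat))).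
  { apply has_jet_near with (fun y => / 2 * (sin y * cf_re t y + cos y * cf_im t y)
                                    + / 2 * (-1 * (sin y * cf_re (t + 1) y) + cos y * cf_im (t + 1) y)).
    - repeat first [apply has_jet_plus | apply has_jet_scal | apply has_jet_mul];
        auto using has_jet_cos, has_jet_sin.
    - apply filter_forall. intros y. rewrite cf_im_double_add1. ring. }
  pose proof (has_jet_unique _ _ _ Hre_c Hre) as Ere.
  pose proof (has_jet_unique _ _ _ Him_c Him) as Eim.
  unfold cf_jet_re_double_add1, cf_jet_im_double_add1 in Ere, Eim.
  rewrite !(cf_jet_re_moments _ (kappa0_eq0 _)), !(cf_jet_im_moments _ (kappa0_eq0 _)) in Ere.
  rewrite !(cf_jet_re_moments _ (kappa0_eq0 _)), !(cf_jet_im_moments _ (kappa0_eq0 _)) in Eim.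
  cbv beta iota delta [jet_add jet_scal jet_mul jet_cos jet_sin jc0 jc1 jc2 jc3 jc4 jc5] in Ere, Eim.
  destruct (Jet5_inj _ _ _ _ _ _ _ _ _ _ _ _ Ere) as (_ & _ & E2 & _ & E4 & _).
  destruct (Jet5_inj _ _ _ _ _ _ _ _ _ _ _ _ Eim) as (_ & E1 & _ & E3 & _ & E5).
  fold a b c in E1, E2, E3, E4, E5. repeat split; lra.
Qed.

Lemma kappa1_eq0 t : kappa t 1%nat = 0.
Proof.
  induction t as [t IH] using (well_founded_induction lt_wf).
  assert (H0 : kappa 0%nat 1%nat = 0).
  { destruct (has_jet_cf _ _ (Hkappa 0%nat)) as [_ Him].
    pose proof (has_jet_unique _ _ _ Him (has_jet_near _ _ _ (has_jet_const 0) (filter_forall _ cf_im_0)))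
      as E.
    rewrite (cf_jet_im_moments _ (kappa0_eq0 _)) in E.
    destruct (Jet5_inj _ _ _ _ _ _ _ _ _ _ _ _ E) as (_ & E1 & _). exact E1. }
  destruct (Nat.Even_or_Odd t) as [[[|m] ->]|[[|m] ->]].
  - exact H0.
  - change (moment (kappa (2 * S m)%nat) 1 = 0).
    rewrite moments_double by lia. apply IH. lia.
  - destruct (moments_double_add1 0) as [E _]. simpl in E |- *. unfold moment in E. lra.
  - change (moment (kappa (2 * S m + 1)%nat) 1 = 0).
    destruct (moments_double_add1 (S m)) as [E _]. rewrite E. unfold moment.
    rewrite !IH by lia. lra.
Qed.

Lemma moments_centered t :
  moment (kappa t) 1 = 0 /\ moment (kappa t) 2 = kappa t 2%nat /\ moment (kappa t) 3 = kappa t 3%nat /\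
  moment (kappa t) 4 = kappa t 4%nat + 3 * kappa t 2%nat ^ 2 /\
  moment (kappa t) 5 = kappa t 5%nat + 10 * kappa t 2%nat * kappa t 3%nat.
Proof. unfold moment. rewrite kappa1_eq0. repeat split; ring. Qed.

Lemma cumulants_double t j : (2 <= j <= 5)%nat -> kappa (2 * t)%nat j = kappa t j.
Proof.
  intros Hj.
  destruct (moments_centered t) as (_ & A2 & A3 & A4 & A5).
  destruct (moments_centered (2 * t)) as (_ & C2 & C3 & C4 & C5).
  pose proof (moments_double t 2 ltac:(lia)) as E2. pose proof (moments_double t 3 ltac:(lia)) as E3.
  pose proof (moments_double t 4 ltac:(lia)) as E4. pose proof (moments_double t 5 ltac:(lia)) as E5.
  rewrite A2, C2 in E2. rewrite A3, C3 in E3. rewrite A4, C4, E2 in E4. rewrite A5, C5, E2, E3 in E5.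
  destruct j as [|[|[|[|[|[|j]]]]]]; try lia; lra.
Qed.

Lemma cumulants_double_add1 t :
  let d j := kappa (t + 1)%nat j - kappa t j in
  kappa (2 * t + 1)%nat 2%nat - kappa t 2%nat = jump2 (d 2%nat) /\
  kappa (2 * t + 1)%nat 3%nat - kappa t 3%nat = jump3 (d 2%nat) (d 3%nat) /\
  kappa (2 * t + 1)%nat 4%nat - kappa t 4%nat = jump4 (d 2%nat) (d 3%nat) (d 4%nat) /\
  kappa (2 * t + 1)%nat 5%nat - kappa t 5%nat = jump5 (d 2%nat) (d 3%nat) (d 4%nat) (d 5%nat).
Proof.
  intros d. unfold d, jump2, jump3, jump4, jump5.
  destruct (moments_double_add1 t) as (_ & E2 & E3 & E4 & E5).
  destruct (moments_centered t) as (A1 & A2 & A3 & A4 & A5).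
  destruct (moments_centered (t + 1)) as (B1 & B2 & B3 & B4 & B5).
  destruct (moments_centered (2 * t + 1)) as (_ & C2 & C3 & C4 & C5).
  rewrite A1, A2, A3, A4, A5, B1, B2, B3, B4, B5, C2, C3, C4, C5 in *.
  set (a2 := kappa t 2%nat) in *. set (a3 := kappa t 3%nat) in *.
  set (a4 := kappa t 4%nat) in *. set (a5 := kappa t 5%nat) in *.
  set (b2 := kappa (t + 1)%nat 2%nat) in *. set (b3 := kappa (t + 1)%nat 3%nat) in *.
  set (b4 := kappa (t + 1)%nat 4%nat) in *. set (b5 := kappa (t + 1)%nat 5%nat) in *.
  set (c2 := kappa (2 * t + 1)%nat 2%nat) in *. set (c3 := kappa (2 * t + 1)%nat 3%nat) in *.
  set (c4 := kappa (2 * t + 1)%nat 4%nat) in *. set (c5 := kappa (2 * t + 1)%nat 5%nat) in *.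
  assert (H2 : c2 = / 2 * (a2 + b2 + 2)) by lra.
  assert (H3 : c3 = / 2 * (a3 + 3 * a2 + b3 - 3 * b2)) by lra.
  rewrite H2 in E4, E5. rewrite H3 in E5.
  assert (H4 : c4 = / 2 * (a4 + 3 * a2 ^ 2 + 4 * a3 + 6 * a2 + 1 + b4 + 3 * b2 ^ 2 - 4 * b3 + 6 * b2 + 1)
                    - 3 * (/ 2 * (a2 + b2 + 2)) ^ 2) by lra.
  assert (H5 : c5 = / 2 * (a5 + 10 * a2 * a3 + 5 * (a4 + 3 * a2 ^ 2) + 10 * a3 + 10 * a2
                          + b5 + 10 * b2 * b3 - 5 * (b4 + 3 * b2 ^ 2) + 10 * b3 - 10 * b2)
                    - 10 * (/ 2 * (a2 + b2 + 2)) * (/ 2 * (a3 + 3 * a2 + b3 - 3 * b2))) by lra.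
  rewrite H2, H3, H4, H5. repeat split; field.
Qed.

Definition increment (t j : nat) : R := kappa (S t) j - kappa t j.

Lemma increment_in_box t :
  in_box (increment t 2) (increment t 3) (increment t 4) (increment t 5).
Proof.
  induction t as [t IH] using (well_founded_induction lt_wf). unfold increment in *.
  destruct (Nat.Even_or_Odd t) as [[[|m] ->]|[m ->]].
  - (* [t = 0]: here [2 t + 1 = t + 1], so the increment is a fixed point of the jumps. *)
    destruct (cumulants_double_add1 0) as (E2 & E3 & E4 & E5). simpl in E2, E3, E4, E5 |- *.
    unfold jump2, jump3, jump4, jump5 in *.
    assert (X2 : kappa 1%nat 2%nat - kappa 0%nat 2%nat = 2) by lra. rewrite X2 in *.
    assert (X3 : kappa 1%nat 3%nat - kappa 0%nat 3%nat = -6) by lra. rewrite X3 in *.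
    assert (X4 : kappa 1%nat 4%nat - kappa 0%nat 4%nat = 26) by lra. rewrite X4 in *.
    assert (X5 : kappa 1%nat 5%nat - kappa 0%nat 5%nat = -150) by lra. rewrite X5.
    unfold in_box. repeat split; apply Rabs_le; lra.
  - replace (S (2 * S m)) with (2 * S m + 1)%nat by lia.
    rewrite !(cumulants_double (S m)) by lia.
    destruct (cumulants_double_add1 (S m)) as (E2 & E3 & E4 & E5). rewrite E2, E3, E4, E5.
    replace (S m + 1)%nat with (S (S m)) by lia.
    exact (proj1 (in_box_jump _ _ _ _ (IH (S m) ltac:(lia)))).
  - replace (S (2 * m + 1)) with (2 * (m + 1))%nat by lia.
    rewrite !(cumulants_double (m + 1)) by lia.
    assert (Hsplit : forall j, kappa (m + 1)%nat j - kappa (2 * m + 1)%nat j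
      = (kappa (m + 1)%nat j - kappa m j) - (kappa (2 * m + 1)%nat j - kappa m j)) by (intros; ring).
    destruct (cumulants_double_add1 m) as (E2 & E3 & E4 & E5).
    rewrite !Hsplit, E2, E3, E4, E5.
    replace (m + 1)%nat with (S m) by lia.
    exact (proj2 (in_box_jump _ _ _ _ (IH m ltac:(lia)))).
Qed.

End Recursion.

Theorem lemma2p2 (kappa : nat -> nat -> R)
  (Hkappa : forall t : nat, is_cumulants t (kappa t)) (t : nat) :
  Rabs (kappa (S t) 2%nat - kappa t 2%nat) <= 2 /\
  Rabs (kappa (S t) 3%nat - kappa t 3%nat) <= 6 /\
  Rabs (kappa (S t) 4%nat - kappa t 4%nat) <= 28 /\
  Rabs (kappa (S t) 5%nat - kappa t 5%nat) <= 240.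
Proof. exact (increment_in_box kappa Hkappa t). Qed.
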